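(* Let $S_\alpha$ and $S_{\alpha'}$ be standard graded skew polynomial algebras in $n$ variables over $k$. If $\alpha'=\mu_{v,\lambda}(\alpha)$ for some $1\le v\le n$ and some $\lambda\in k^\times$, then the categories $\mathrm{GrMod}\,S_\alpha$ and $\mathrm{GrMod}\,S_{\alpha'}$ are equivalent.
   Context: Let $k$ be an algebraically closed field of characteristic $0$. For a matrix $\alpha=(\alpha_{ij})\in M_n(k)$ with $\alpha_{ii}=1$ and $\alpha_{ij}\alpha_{ji}=1$ for all $i,j$, the standard graded skew polynomial algebra is $S_\alpha=k\langle x_1,\dots,x_n\rangle/(x_ix_j-\alpha_{ij}x_jx_i \mid 1\le i,j\le n)$ with $\deg x_i=1$. $\mathrm{GrMod}\,S$ denotes the category of $\mathbb{Z}$-graded right $S$-modules with degree-preserving module homomorphisms. For such $\alpha$, $1\le v\le n$ and $\lambda\in k^\times$, define $\mu_{v,\lambda}(\alpha)=(\beta_{ij})$ by $\beta_{vi}=\lambda^{-1}\alpha_{vi}$ and $\beta_{iv}=\lambda\alpha_{iv}$ for $i\ne v$, and $\beta_{ij}=\alpha_{ij}$ otherwise. *)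

From HB Require Import structures.
From mathcomp Require Import all_boot all_order all_algebra.
Unset Printing Implicit Defensive.
Import Order.TTheory GRing.Theory Num.Theory.
Local Open Scope ring_scope.

Definition skew_param {k : fieldType} {n : nat} (a : 'M[k]_n) : Prop :=
  (forall i, a i i = 1) /\ (forall i j, a i j * a j i = 1).

Definition mu {k : fieldType} {n : nat} (v : 'I_n) (l : k) (a : 'M[k]_n)
  : 'M[k]_n :=
  \matrix_(i, j)
    if (i == v) && (j != v) then l^-1 * a i j
    else if (j == v) && (i != v) then l * a i j
    else a i j.

Definition is_linear {k : fieldType} {U V : lmodType k} (f : U -> V) : Prop :=
  forall (c : k) (x y : U), f (c *: x + y) = c *: f x + f y.

(* A Z-graded right S_alpha-module, S_alpha = k<x_1..x_n>/(x_i x_j - a_ij x_j x_i),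
   deg x_i = 1: a family of k-vector spaces M_d (d in Z) with linear maps
   (right multiplication by x_j) M_d -> M_(d+1) satisfying
   (m x_i) x_j = a_ij (m x_j) x_i. *)
Record grmod {k : fieldType} {n : nat} (a : 'M[k]_n) := GrMod {
  gm_sp : int -> lmodType k;
  gm_act : forall (j : 'I_n) (d : int), gm_sp d -> gm_sp (d + 1);
  gm_act_lin : forall (j : 'I_n) (d : int), is_linear (gm_act j d);
  gm_rel : forall (i j : 'I_n) (d : int) (m : gm_sp d),
      gm_act j (d + 1) (gm_act i d m) = a i j *: gm_act i (d + 1) (gm_act j d m)
}.
Arguments gm_sp {k n a}.
Arguments gm_act {k n a} _ _ _.

Record grhom {k : fieldType} {n : nat} {a : 'M[k]_n} (M N : grmod a) := GrHom {
  gh_fun : forall d : int, gm_sp M d -> gm_sp N d;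
  gh_lin : forall d : int, is_linear (gh_fun d);
  gh_comm : forall (j : 'I_n) (d : int) (m : gm_sp M d),
      gh_fun (d + 1) (gm_act M j d m) = gm_act N j d (gh_fun d m)
}.
Arguments gh_fun {k n a M N} _ _.

Section Cat.
Variables (k : fieldType) (n : nat).

Definition heq {a : 'M[k]_n} {M N : grmod a} (f g : grhom M N) : Prop :=
  forall d x, gh_fun f d x = gh_fun g d x.

Definition is_comp {a : 'M[k]_n} {M N P : grmod a}
    (f : grhom M N) (g : grhom N P) (h : grhom M P) : Prop :=
  forall d x, gh_fun h d x = gh_fun g d (gh_fun f d x).

Definition is_id {a : 'M[k]_n} {M : grmod a} (f : grhom M M) : Prop :=
  forall d x, gh_fun f d x = x.

Record functor (a b : 'M[k]_n) := Functor {
  fobj : grmod a -> grmod b;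
  fmap : forall M N : grmod a, grhom M N -> grhom (fobj M) (fobj N);
  fmap_heq : forall (M N : grmod a) (f g : grhom M N),
      heq f g -> heq (fmap M N f) (fmap M N g);
  fmap_id : forall (M : grmod a) (f : grhom M M), is_id f -> is_id (fmap M M f);
  fmap_comp : forall (M N P : grmod a) (f : grhom M N) (g : grhom N P) (h : grhom M P),
      is_comp f g h -> is_comp (fmap M N f) (fmap N P g) (fmap M P h)
}.
Arguments fobj {a b} _ _.
Arguments fmap {a b} _ {M N} _.

Definition nat_iso_id {a b : 'M[k]_n} (F : functor a b) (G : functor b a) : Prop :=
  exists (eta : forall M : grmod a, grhom (fobj G (fobj F M)) M)
         (etainv : forall M : grmod a, grhom M (fobj G (fobj F M))),
    (forall M d x, gh_fun (eta M) d (gh_fun (etainv M) d x) = x) /\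
    (forall M d x, gh_fun (etainv M) d (gh_fun (eta M) d x) = x) /\
    (forall M N (f : grhom M N) d x,
        gh_fun (eta N) d (gh_fun (fmap G (fmap F f)) d x)
        = gh_fun f d (gh_fun (eta M) d x)).

Definition grmod_equiv (a b : 'M[k]_n) : Prop :=
  exists (F : functor a b) (G : functor b a), nat_iso_id F G /\ nat_iso_id G F.

End Cat.
Arguments heq {k n a M N} _ _.
Arguments is_comp {k n a M N P} _ _ _.
Arguments is_id {k n a M} _.
Arguments functor {k n} _ _.
Arguments nat_iso_id {k n a b} _ _.
Arguments grmod_equiv {k n} _ _.

From HB Require Import structures.
From mathcomp Require Import all_boot all_order all_algebra.
From mathcomp Require Import ring.
Import GRing.Theory.
Local Open Scope ring_scope.

(* Rescaling the action of x_j on degree d by nonzero scalars c_j(d) turns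
   graded S_a-modules into graded S_b-modules as soon as
   b_ij c_i(d+1) c_j(d) = a_ij c_j(d+1) c_i(d), leaving morphisms unchanged;
   rescaling back by the inverses c_j(d)^-1 recovers the original module
   exactly, so this is an equivalence GrMod S_a ~ GrMod S_b.  For mu_{v,l}
   take c_j(d) = w_j^d with w_v = l and w_j = 1 otherwise: this is the Zhang
   twist of S_a by the graded automorphism x_v |-> l x_v. *)

Section Linear.
Variables (k : fieldType) (U V : lmodType k) (f : U -> V).
Hypothesis f_lin : is_linear f.

Lemma is_linear0 : f 0 = 0.
Proof.
have := f_lin 1 0 0; rewrite !scale1r !addr0 => E.
by apply: (@addrI _ (f 0)); rewrite addr0.
Qed.

Lemma is_linearZ c x : f (c *: x) = c *: f x.
Proof. by have := f_lin c x 0; rewrite is_linear0 !addr0. Qed.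

End Linear.
Arguments is_linear0 {k U V f}.
Arguments is_linearZ {k U V f}.

Definition twist_compatible {k : fieldType} {n : nat}
    (c : 'I_n -> int -> k) (a b : 'M[k]_n) : Prop :=
  forall i j d, b i j * (c i (d + 1) * c j d) = a i j * (c j (d + 1) * c i d).

Section Twist.
Variables (k : fieldType) (n : nat) (c : 'I_n -> int -> k) (a b : 'M[k]_n).
Hypothesis c_compat : twist_compatible c a b.

Definition twist_act (M : grmod a) j d (m : gm_sp M d) : gm_sp M (d + 1) :=
  c j d *: gm_act M j d m.

Lemma twist_act_lin (M : grmod a) j d : is_linear (twist_act M j d).
Proof.
by move=> s x y; rewrite /twist_act (gm_act_lin _ M) scalerDr !scalerA mulrC.
Qed.

Lemma twist_act_rel (M : grmod a) i j d (m : gm_sp M d) :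
  twist_act M j (d + 1) (twist_act M i d m)
  = b i j *: twist_act M i (d + 1) (twist_act M j d m).
Proof.
rewrite /twist_act !(is_linearZ (gm_act_lin _ M _ _)) gm_rel !scalerA.
by congr (_ *: _); rewrite -[RHS]mulrA c_compat mulrC.
Qed.

Definition twist_grmod (M : grmod a) : grmod b :=
  @GrMod k n b (gm_sp M) (twist_act M) (twist_act_lin M) (twist_act_rel M).

Lemma twist_grhom_comm (M N : grmod a) (f : grhom M N) j d (m : gm_sp M d) :
  gh_fun f (d + 1) (twist_act M j d m) = twist_act N j d (gh_fun f d m).
Proof. by rewrite /twist_act (is_linearZ (gh_lin _ _ f _)) gh_comm. Qed.

Definition twist_grhom (M N : grmod a) (f : grhom M N) :
    grhom (twist_grmod M) (twist_grmod N) :=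
  @GrHom k n b (twist_grmod M) (twist_grmod N) (gh_fun f) (gh_lin _ _ f)
    (twist_grhom_comm _ _ f).

Definition twist_functor : functor a b :=
  @Functor k n a b twist_grmod twist_grhom
    (fun _ _ _ _ E => E) (fun _ _ E => E) (fun _ _ _ _ _ _ E => E).

End Twist.
Arguments twist_grmod {k n c a b}.
Arguments twist_functor {k n c a b}.

Section TwistInverse.
Variables (k : fieldType) (n : nat) (c c' : 'I_n -> int -> k) (a b : 'M[k]_n).
Hypotheses (c_compat : twist_compatible c a b) (c'_compat : twist_compatible c' b a).
Hypothesis c'K : forall j d, c' j d * c j d = 1.

Let twice (M : grmod a) : grmod a :=
  twist_grmod c'_compat (twist_grmod c_compat M).

Lemma twist_act_twiceK (M : grmod a) j d (m : gm_sp M d) :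
  gm_act (twice M) j d m = gm_act M j d m.
Proof. by rewrite /= /twist_act scalerA c'K scale1r. Qed.

Definition untwist (M : grmod a) : grhom (twice M) M :=
  @GrHom k n a (twice M) M (fun _ x => x) (fun _ _ _ _ => erefl)
    (twist_act_twiceK M).

Definition retwist (M : grmod a) : grhom M (twice M) :=
  @GrHom k n a M (twice M) (fun _ x => x) (fun _ _ _ _ => erefl)
    (fun j d m => esym (twist_act_twiceK M j d m)).

Lemma twist_functorK :
  nat_iso_id (twist_functor c_compat) (twist_functor c'_compat).
Proof. by exists untwist, retwist. Qed.

End TwistInverse.
Arguments twist_functorK {k n c c' a b}.

Lemma twist_compatible_inv {k : fieldType} {n : nat} {c : 'I_n -> int -> k}
    {a b : 'M[k]_n} :
  (forall j d, c j d != 0) -> twist_compatible c a b ->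
  twist_compatible (fun j d => (c j d)^-1) b a.
Proof.
move=> c_neq0 c_compat i j d.
have -> : b i j = a i j * (c j (d + 1) * c i d) / (c i (d + 1) * c j d).
  by rewrite -c_compat mulfK // mulf_neq0.
by field; rewrite !c_neq0.
Qed.

Lemma grmod_equiv_twist {k : fieldType} {n : nat} {c : 'I_n -> int -> k}
    {a b : 'M[k]_n} :
  (forall j d, c j d != 0) -> twist_compatible c a b -> grmod_equiv a b.
Proof.
move=> c_neq0 c_compat.
have c_inv_compat := twist_compatible_inv c_neq0 c_compat.
exists (twist_functor c_compat), (twist_functor c_inv_compat); split.
- by apply: twist_functorK => j d; rewrite mulVf.
- by apply: twist_functorK => j d; rewrite mulfV.
Qed.

Definition rescale {k : fieldType} {n : nat} (w : 'I_n -> k) (a : 'M[k]_n) :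
    'M[k]_n :=
  \matrix_(i, j) (a i j * w j / w i).

Lemma twist_compatible_rescale {k : fieldType} {n : nat} (w : 'I_n -> k)
    (a : 'M[k]_n) :
  (forall j, w j != 0) -> twist_compatible (fun j d => w j ^ d) a (rescale w a).
Proof.
move=> w_neq0 i j d; rewrite mxE !expfzDr ?expr1z ?w_neq0 //.
by field; rewrite w_neq0.
Qed.

Lemma grmod_equiv_rescale {k : fieldType} {n : nat} (w : 'I_n -> k)
    (a : 'M[k]_n) :
  (forall j, w j != 0) -> grmod_equiv a (rescale w a).
Proof.
move=> w_neq0; apply: grmod_equiv_twist (twist_compatible_rescale w a w_neq0).
by move=> j d; rewrite expfz_eq0 negb_and w_neq0 orbT.
Qed.

Definition axis_weight {k : fieldType} {n : nat} (v : 'I_n) (l : k) (j : 'I_n)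
    : k :=
  if j == v then l else 1.

Lemma axis_weight_neq0 {k : fieldType} {n : nat} (v : 'I_n) (l : k) j :
  l != 0 -> axis_weight v l j != 0.
Proof. by rewrite /axis_weight; case: ifP; rewrite ?oner_neq0. Qed.

Lemma mu_rescale {k : fieldType} {n : nat} (v : 'I_n) (l : k) (a : 'M[k]_n) :
  l != 0 -> mu v l a = rescale (axis_weight v l) a.
Proof.
move=> l_neq0; apply/matrixP => i j; rewrite !mxE /axis_weight.
by case: (eqVneq i v) => [->|_]; case: (eqVneq j v) => [->|_] //=;
  field; rewrite ?oner_neq0.
Qed.

Theorem lemma2p6 (k : closedFieldType) (Hchar : [pchar k] =i pred0)
  (n : nat) (a a' : 'M[k]_n) (Ha : skew_param a) (Ha' : skew_param a')
  (v : 'I_n) (l : k) (Hl : l != 0) (Hmu : a' = mu v l a) :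
  grmod_equiv a a'.
Proof.
rewrite Hmu mu_rescale //.
by apply: grmod_equiv_rescale => j; apply: axis_weight_neq0.
Qed.
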